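(* For all positive integers $m_1,\dots,m_S$, $B(m_1,\dots,m_S)$ equals the coefficient of $x_1^{m_1}\cdots x_S^{m_S}$ in the Taylor expansion at the origin of $$F_B(x_1,\dots,x_S)=\frac{x_1\cdots x_S}{(1-x_1)\cdots(1-x_S)(1-x_1-\dots-x_S)}.$$
   Context: For nonnegative integers $n_1,\dots,n_S$, $E(n_1,\dots,n_S)$ denotes the number of block derangements: $S$ players hold $n_1,\dots,n_S$ distinct cards respectively; all $N=n_1+\dots+n_S$ cards are redealt so that player $j$ again receives exactly $n_j$ cards (only which cards each player gets matters); $E$ counts the deals in which no player receives any card he originally held. Equivalently, $E(n_1,\dots,n_S)$ is the coefficient of $x_1^{n_1}\cdots x_S^{n_S}$ in $\prod_{j=1}^S(x_1+\dots+x_S-x_j)^{n_j}$. By convention $E(0,\dots,0)=1$. For positive integers $m_1,\dots,m_S$, $B(m_1,\dots,m_S)=\sum_{k_1=1}^{m_1}\cdots\sum_{k_S=1}^{m_S}\binom{m_1}{k_1}\cdots\binom{m_S}{k_S}E(k_1-1,\dots,k_S-1)$. *)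

From HB Require Import structures.
From mathcomp Require Import all_boot all_order all_algebra.
Set Implicit Arguments. Unset Strict Implicit. Unset Printing Implicit Defensive.
Import Order.TTheory GRing.Theory Num.Theory.

(* Multi-indices (exponent vectors) for S variables x_0..x_{S-1}. *)
Definition mono (S : nat) := {ffun 'I_S -> nat}.

(* ---------- Block derangements (combinatorial definition) ----------
   Player j holds the cards (j, k) for k < n j.  A deal assigns to every card
   the player receiving it; player j must receive exactly n j cards, and no
   card may go back to its original holder. *)
Definition card_t (S : nat) (n : mono S) := {j : 'I_S & 'I_(n j)}.

Definition E (S : nat) (n : mono S) : nat :=
  #|[set d : {ffun card_t n -> 'I_S} |
      [forall c, d c != tag c] &&
      [forall j : 'I_S, #|[set c | d c == j]| == n j]]|.

(* B(m) = sum_{1<=k_i<=m_i} prod_i binom(m_i,k_i) E(k_1-1,...,k_S-1).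
   The k_i range over 'I_(sum m).+1 (a bound large enough for every k_i <= m_i). *)
Definition B (S : nat) (m : mono S) : nat :=
  \sum_(k : {ffun 'I_S -> 'I_(\sum_i m i).+1} |
          [forall i, (1 <= k i) && (k i <= m i)])
     (\prod_i 'C(m i, k i)) * E [ffun i => (k i).-1].

Definition series (S : nat) := mono S -> rat.

Local Open Scope ring_scope.

Definition ps_zero S : series S := fun _ => 0.
Definition ps_one S : series S := fun a => ((a == [ffun => 0%N]) : bool)%:R.
Definition ps_X S (i : 'I_S) : series S :=
  fun a => ((a == [ffun j => ((j == i) : nat)]) : bool)%:R.
Definition ps_add S (f g : series S) : series S := fun a => f a + g a.
Definition ps_sub S (f g : series S) : series S := fun a => f a - g a.
Definition ps_mul S (f g : series S) : series S := fun m =>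
  \sum_(a : {ffun 'I_S -> 'I_(\sum_i m i).+1} | [forall i, a i <= m i]%N)
     f [ffun i => nat_of_ord (a i)] * g [ffun i => (m i - a i)%N].
Definition ps_prod S (fs : seq (series S)) : series S := foldr (@ps_mul S) (@ps_one S) fs.
Definition ps_sum S (fs : seq (series S)) : series S := foldr (@ps_add S) (@ps_zero S) fs.

Definition FB_num S : series S := ps_prod [seq ps_X i | i <- enum 'I_S].
Definition FB_den S : series S :=
  ps_mul (ps_prod [seq ps_sub (@ps_one S) (ps_X i) | i <- enum 'I_S])
         (ps_sub (@ps_one S) (ps_sum [seq ps_X i | i <- enum 'I_S])).

(* G is the Taylor expansion at the origin of F_B = FB_num / FB_den
   (the denominator has constant term 1, so such G is unique). *)
Definition is_FB_expansion S (G : series S) : Prop :=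
  forall a, ps_mul G (@FB_den S) a = @FB_num S a.

From mathcomp Require Import all_boot all_order all_algebra.
From mathcomp Require Import mpoly zify.
Set Implicit Arguments. Unset Strict Implicit. Unset Printing Implicit Defensive.
Import GRing.Theory.
Local Open Scope ring_scope.

(* Power series are compared with polynomials of {mpoly R[S]} by truncation:
   [eq_upto d p q] says that p and q have the same coefficients in total degree
   at most d.  This is a congruence, and truncating a series at degree d turns
   the Cauchy product [ps_mul] into the polynomial product.  Writing
   Y = x_1 + ... + x_S, every Z without constant term has the inverse
   1 + Z + ... + Z^d of 1 - Z up to degree d, so the expansion of F_B exists,
   is unique, and its coefficient at x^a is that of x_1...x_S * den_inv |a|,
   the product of the truncated geometric series of the x_i and of Y.

   That coefficient is a sum over the exponents c_i + 1 <= m_i taken from the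
   factors x_i / (1 - x_i), hence equals the coefficient of x^m in
     prod_i x_i sum_(r < m_i) x_i^r Y^(m_i - 1 - r).
   Writing Y = (Y - x_i) + x_i, the binomial theorem turns the i-th factor into
   sum_(1 <= k <= m_i) C(m_i, k) (Y - x_i)^(k-1) x_i^(m_i-k+1), and the
   coefficient of x^(k-1) in prod_i (Y - x_i)^(k_i - 1) counts the block
   derangements E(k-1). *)

Section Monomials.
Variable S : nat.

Definition to_mnm (a : mono S) : 'X_{1..S} := [multinom a i | i < S].
Definition of_mnm (a : 'X_{1..S}) : mono S := [ffun i => a i].

Lemma to_mnmE a i : to_mnm a i = a i. Proof. by rewrite mnmE. Qed.

Lemma of_mnmK : cancel of_mnm to_mnm.
Proof. by move=> a; apply/mnmP => i; rewrite to_mnmE ffunE. Qed.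

Lemma to_mnmK : cancel to_mnm of_mnm.
Proof. by move=> a; apply/ffunP => i; rewrite ffunE to_mnmE. Qed.

Lemma of_mnm_inj : injective of_mnm. Proof. exact: can_inj of_mnmK. Qed.

Lemma mdeg_to_mnm a : mdeg (to_mnm a) = (\sum_i a i)%N.
Proof. by rewrite mdegE; apply: eq_bigr => i _; exact: to_mnmE. Qed.

Lemma mdeg_of_mnm a : (\sum_i of_mnm a i)%N = mdeg a.
Proof. by rewrite -mdeg_to_mnm of_mnmK. Qed.

Lemma to_mnm_lep a b : (to_mnm b <= to_mnm a)%MM = [forall i, b i <= a i]%N.
Proof. by apply/mnm_lepP/forallP => h i; have := h i; rewrite ?to_mnmE. Qed.

Lemma to_mnmB a b : (to_mnm a - to_mnm b)%MM = to_mnm [ffun i => a i - b i]%N.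
Proof. by apply/mnmP => i; rewrite mnmBE !to_mnmE ffunE. Qed.

Lemma mdeg_to_mnm_le (a : mono S) (b : 'I_S -> nat) :
  (forall i, b i <= a i)%N -> (mdeg (to_mnm [ffun i => b i]) <= \sum_i a i)%N.
Proof. by move=> h; rewrite mdeg_to_mnm; apply: leq_sum => i _; rewrite ffunE. Qed.

Lemma mdeg_to_mnm_split (a : mono S) (b : 'I_S -> nat) :
  (forall i, b i <= a i)%N ->
  (mdeg (to_mnm [ffun i => b i]) + mdeg (to_mnm [ffun i => a i - b i]) = \sum_i a i)%N.
Proof.
move=> h; rewrite !mdeg_to_mnm -big_split /=; apply: eq_bigr => i _.
by rewrite !ffunE subnKC.
Qed.

End Monomials.

Section Coefficients.
Variables (R : comNzRingType) (S : nat).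
Implicit Types (p q : {mpoly R[S]}).

Lemma coef_Xmul u q a :
  ('X_[u] * q)@_a = if (u <= a)%MM then q@_(a - u)%MM else 0.
Proof.
case: ifP => ua; first by rewrite -{1}(submK ua) addmC mulrC mcoeffMX.
apply/eqP; apply: contraFT ua; rewrite -mcoeff_msupp mulrC.
by rewrite (perm_mem (msuppMX q u)) => /mapP [m' _ ->]; exact: lem_addr.
Qed.

(* The coefficient of a product, indexed exactly as the Cauchy product [ps_mul]. *)
Lemma coef_mul p q (a : mono S) :
  (p * q)@_(to_mnm a) =
  \sum_(b : {ffun 'I_S -> 'I_(\sum_i a i).+1} | [forall i, b i <= a i]%N)
     p@_(to_mnm [ffun i => nat_of_ord (b i)]) * q@_(to_mnm [ffun i => (a i - b i)%N]).
Proof.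
rewrite {1}(mpolyE p) big_distrl /= raddf_sum /=.
under eq_bigr do rewrite -scalerAl mcoeffZ coef_Xmul.
under [RHS]eq_bigr do rewrite {1}(mpolyE p) raddf_sum big_distrl /=.
rewrite exchange_big /=; apply: eq_bigr => u _.
case: ifP => ua; last first.
  rewrite mulr0 big1 // => b /forallP hb; rewrite mcoeffZ mcoeffX.
  case: eqP => [eub|]; last by rewrite mulr0 mul0r.
  move/negP: ua; case; apply/mnm_lepP => i.
  by rewrite eub !to_mnmE ffunE; exact: hb.
have hu i : (u i < (\sum_i a i).+1)%N.
  rewrite ltnS; apply: leq_trans (mnm_lepP ua i) _.
  by rewrite to_mnmE (bigD1 i) //= leq_addr.
set bu := [ffun i => Ordinal (hu i)].
have bu_u : to_mnm [ffun i => nat_of_ord (bu i)] = u.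
  by apply/mnmP => i; rewrite to_mnmE !ffunE.
rewrite (bigD1 bu) /=; last first.
  by apply/forallP => i; rewrite ffunE -(to_mnmE a); exact: mnm_lepP.
rewrite [X in _ + X]big1 ?addr0 => [|b /andP [_ hb]].
  rewrite mcoeffZ mcoeffX bu_u eqxx mulr1; congr (_ * _@__).
  by apply/mnmP => i; rewrite mnmBE !to_mnmE !ffunE.
rewrite mcoeffZ mcoeffX; case: eqP => [eub|]; last by rewrite mulr0 mul0r.
move/negP: hb; case; apply/eqP/ffunP => i; apply/val_inj.
by rewrite !ffunE /= eub to_mnmE ffunE.
Qed.

Definition eq_upto (d : nat) p q := forall a, (mdeg a <= d)%N -> p@_a = q@_a.

Lemma eq_upto_refl d p : eq_upto d p p. Proof. by []. Qed.
Arguments eq_upto_refl {d} p.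

Lemma eq_upto_sym d p q : eq_upto d p q -> eq_upto d q p.
Proof. by move=> h a ha; rewrite h. Qed.

Lemma eq_upto_trans d p q r : eq_upto d p q -> eq_upto d q r -> eq_upto d p r.
Proof. by move=> h1 h2 a ha; rewrite h1 ?h2. Qed.

Lemma eq_uptoD d p p' q q' :
  eq_upto d p p' -> eq_upto d q q' -> eq_upto d (p + q) (p' + q').
Proof. by move=> hp hq a ha; rewrite !mcoeffD hp ?hq. Qed.

Lemma eq_uptoB d p p' q q' :
  eq_upto d p p' -> eq_upto d q q' -> eq_upto d (p - q) (p' - q').
Proof. by move=> hp hq a ha; rewrite !mcoeffB hp ?hq. Qed.

(* Coefficients of degree <= d of a product only involve coefficients of the
   factors of degree <= d. *)
Lemma eq_uptoM d p p' q q' :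
  eq_upto d p p' -> eq_upto d q q' -> eq_upto d (p * q) (p' * q').
Proof.
move=> hp hq a ha; rewrite -(of_mnmK a) !coef_mul; apply: eq_bigr => b /forallP hb.
rewrite -mdeg_of_mnm in ha.
rewrite hp ?hq //; apply: leq_trans ha; apply: mdeg_to_mnm_le => // i.
by rewrite leq_subr.
Qed.

Lemma eq_upto_prod d (I : Type) (s : seq I) (F G : I -> {mpoly R[S]}) :
  (forall i, eq_upto d (F i) (G i)) ->
  eq_upto d (\prod_(i <- s) F i) (\prod_(i <- s) G i).
Proof. by move=> h; apply: (big_ind2 (eq_upto d)) => // *; exact: eq_uptoM. Qed.

Lemma eq_upto_mul0 i j p q :
  eq_upto i p 0 -> eq_upto j q 0 -> eq_upto (i + j).+1 (p * q) 0.
Proof.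
move=> hp hq a ha; rewrite mcoeff0 -(of_mnmK a) coef_mul big1 // => b /forallP hb.
have deg_a := etrans (mdeg_to_mnm_split hb) (mdeg_of_mnm a).
case: (leqP (mdeg (to_mnm [ffun k => nat_of_ord (b k)])) i) => h1.
  by rewrite hp ?mcoeff0 ?mul0r.
rewrite hq ?mcoeff0 ?mulr0 //.
by move: ha h1; rewrite -deg_a; move: (mdeg _) (mdeg _) => x y; lia.
Qed.

Lemma eq_upto_pow0 d k Z : Z@_0%MM = 0 -> (d < k)%N -> eq_upto d (Z ^+ k) 0.
Proof.
move=> Z0; have Z0' : eq_upto 0 Z 0.
  by move=> a; rewrite leqn0 mdeg_eq0 => /eqP ->; rewrite Z0 mcoeff0.
elim: k d => // k ih [_|d].
  by rewrite exprS -(mul0r (Z ^+ k)); apply: (eq_uptoM Z0').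
by rewrite ltnS exprS => /ih hk; exact: (eq_upto_mul0 Z0' hk).
Qed.

End Coefficients.

Section Denominator.
Variables (R : comNzRingType) (S : nat).
Notation poly := {mpoly R[S]}.

Definition xprod : poly := \prod_(i < S) 'X_i.
Definition xsum : poly := \sum_(i < S) 'X_i.
Definition den_poly : poly := (\prod_(i < S) (1 - 'X_i)) * (1 - xsum).

Definition geom (d : nat) (Z : poly) : poly := \sum_(k < d.+1) Z ^+ k.
Definition den_inv (d : nat) : poly := (\prod_(i < S) geom d 'X_i) * geom d xsum.

Lemma coef0_X i : ('X_i : poly)@_0%MM = 0.
Proof. by rewrite mcoeffX; case: eqP => // /mnmP /(_ i); rewrite mnm1E mnm0E eqxx. Qed.

Lemma coef0_xsum : xsum@_0%MM = 0.
Proof. by rewrite raddf_sum big1 // => i _; exact: coef0_X. Qed.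

Lemma geom_inv d Z : Z@_0%MM = 0 -> eq_upto d ((1 - Z) * geom d Z) 1.
Proof.
move=> Z0; have -> : (1 - Z) * geom d Z = 1 - Z ^+ d.+1.
  by rewrite -opprB mulNr -subrX1 opprB.
rewrite -[X in eq_upto _ _ X]subr0; apply: eq_uptoB => //; exact: eq_upto_pow0.
Qed.

Lemma den_invP d : eq_upto d (den_poly * den_inv d) 1.
Proof.
rewrite mulrACA -big_split /= -[X in eq_upto _ _ X]mulr1; apply: eq_uptoM.
  apply: (big_ind (fun p => eq_upto d p 1)) => // [p q hp hq|i _].
    by rewrite -(mulr1 1); exact: eq_uptoM.
  by apply: geom_inv; exact: coef0_X.
by apply: geom_inv; exact: coef0_xsum.
Qed.

Lemma geom_trunc e d Z : Z@_0%MM = 0 -> (e <= d)%N -> eq_upto e (geom d Z) (geom e Z).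
Proof.
move=> Z0 hed; rewrite /geom -!(big_mkord xpredT (fun k => Z ^+ k)).
rewrite (big_cat_nat (n := e.+1)) //= -[X in eq_upto _ _ X]addr0; apply: eq_uptoD => //.
rewrite big_seq; apply: (big_ind (fun p => eq_upto e p 0)) => //.
  by move=> x y hx hy; rewrite -(addr0 0); exact: eq_uptoD.
by move=> k; rewrite mem_index_iota => /andP [hk _]; exact: eq_upto_pow0.
Qed.

Lemma den_inv_trunc e d : (e <= d)%N -> eq_upto e (den_inv d) (den_inv e).
Proof.
move=> hed; apply: eq_uptoM; last by apply: geom_trunc => //; exact: coef0_xsum.
by apply: eq_upto_prod => i; apply: geom_trunc => //; exact: coef0_X.
Qed.

End Denominator.
Arguments xprod {R S}.
Arguments xsum {R S}.
Arguments den_poly {R S}.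
Arguments den_inv {R S} d.
Arguments den_invP {R S d}.
Arguments den_inv_trunc {R S e d}.

Section Truncation.
Variable S : nat.
Notation poly := {mpoly rat[S]}.

Definition trunc (d : nat) (f : series S) : poly :=
  \sum_(k : 'X_{1..S < d.+1}) f (of_mnm k) *: 'X_[bmnm k].

Lemma coef_trunc d f a : (mdeg a <= d)%N -> (trunc d f)@_a = f (of_mnm a).
Proof.
move=> ha; rewrite raddf_sum (bigD1 (BMultinom (ha : mdeg a < d.+1)%N)) //=.
rewrite mcoeffZ mcoeffX eqxx mulr1 big1 ?addr0 // => k hk.
rewrite mcoeffZ mcoeffX; case: eqP => [e|]; last by rewrite mulr0.
by move/negP: hk; case; apply/eqP/val_inj.
Qed.

Lemma trunc_ext d f g : (forall a, f a = g a) -> trunc d f = trunc d g.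
Proof. by move=> h; apply: eq_bigr => k _; rewrite h. Qed.

(* Truncation is a ring morphism up to degree d; the key point is that the
   Cauchy product [ps_mul] is the coefficient formula [coef_mul]. *)
Lemma trunc_mul d f g : eq_upto d (trunc d (ps_mul f g)) (trunc d f * trunc d g).
Proof.
move=> a ha; rewrite coef_trunc // -[a in RHS]of_mnmK coef_mul.
apply: eq_bigr => b /forallP hb; rewrite -mdeg_of_mnm in ha.
rewrite !coef_trunc ?to_mnmK //; apply: leq_trans ha; apply: mdeg_to_mnm_le => // i.
by rewrite leq_subr.
Qed.

Lemma trunc_add d f g : eq_upto d (trunc d (ps_add f g)) (trunc d f + trunc d g).
Proof. by move=> a ha; rewrite mcoeffD !coef_trunc. Qed.

Lemma trunc_sub d f g : eq_upto d (trunc d (ps_sub f g)) (trunc d f - trunc d g).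
Proof. by move=> a ha; rewrite mcoeffB !coef_trunc. Qed.

Lemma trunc_zero d : eq_upto d (trunc d (@ps_zero S)) 0.
Proof. by move=> a ha; rewrite mcoeff0 coef_trunc. Qed.

Lemma trunc_one d : eq_upto d (trunc d (@ps_one S)) 1.
Proof.
move=> a ha; rewrite coef_trunc // mcoeff1 /ps_one; congr (_%:R).
have -> : [ffun=> 0%N] = @of_mnm S 0%MM by apply/ffunP => i; rewrite !ffunE mnm0E.
by rewrite (inj_eq (@of_mnm_inj S)).
Qed.

Lemma trunc_X d i : eq_upto d (trunc d (ps_X i)) 'X_i.
Proof.
move=> a ha; rewrite coef_trunc // mcoeffX /ps_X eq_sym; congr (_%:R).
have -> : [ffun j => ((j == i) : nat)] = @of_mnm S U_(i)%MM.
  by apply/ffunP => j; rewrite !ffunE mnm1E eq_sym.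
by rewrite (inj_eq (@of_mnm_inj S)).
Qed.

Lemma trunc_prod d (I : Type) (s : seq I) (F : I -> series S) (G : I -> poly) :
  (forall x, eq_upto d (trunc d (F x)) (G x)) ->
  eq_upto d (trunc d (ps_prod [seq F x | x <- s])) (\prod_(x <- s) G x).
Proof.
move=> h; elim: s => [|x s ih]; first by rewrite big_nil; exact: trunc_one.
by rewrite big_cons; exact: eq_upto_trans (trunc_mul (F x) _) (eq_uptoM (h x) ih).
Qed.

Lemma trunc_sum d (I : Type) (s : seq I) (F : I -> series S) (G : I -> poly) :
  (forall x, eq_upto d (trunc d (F x)) (G x)) ->
  eq_upto d (trunc d (ps_sum [seq F x | x <- s])) (\sum_(x <- s) G x).
Proof.
move=> h; elim: s => [|x s ih]; first by rewrite big_nil; exact: trunc_zero.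
by rewrite big_cons; exact: eq_upto_trans (trunc_add (F x) _) (eq_uptoD (h x) ih).
Qed.

Lemma trunc_num d : eq_upto d (trunc d (@FB_num S)) xprod.
Proof. by rewrite /xprod -big_enum; apply: trunc_prod => i; exact: trunc_X. Qed.

Lemma trunc_den d : eq_upto d (trunc d (@FB_den S)) den_poly.
Proof.
apply: eq_upto_trans (trunc_mul _ _) _; apply: eq_uptoM.
  rewrite -big_enum; apply: trunc_prod => i; apply: eq_upto_trans (trunc_sub _ _) _.
  by apply: eq_uptoB; [exact: trunc_one | exact: trunc_X].
apply: eq_upto_trans (trunc_sub _ _) _; apply: eq_uptoB; first exact: trunc_one.
by rewrite /xsum -big_enum; apply: trunc_sum => i; exact: trunc_X.
Qed.

Lemma FB_expansion_trunc (G : series S) d :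
  is_FB_expansion G -> eq_upto d (trunc d G) (xprod * den_inv d).
Proof.
move=> hG.
have GD : eq_upto d (trunc d G * den_poly) xprod.
  apply: (eq_upto_trans (eq_uptoM (eq_upto_refl _) (eq_upto_sym (@trunc_den d)))).
  apply: (eq_upto_trans (eq_upto_sym (trunc_mul _ _))).
  by rewrite (trunc_ext _ hG); exact: trunc_num.
rewrite -[trunc d G]mulr1.
apply: (eq_upto_trans (eq_uptoM (eq_upto_refl _) (eq_upto_sym (@den_invP _ _ d)))).
by rewrite mulrA; apply: eq_uptoM (eq_upto_refl _).
Qed.

Definition FB_series : series S :=
  fun a => (xprod * den_inv (\sum_i a i))@_(to_mnm a).

Lemma FB_seriesP : is_FB_expansion FB_series.
Proof.
move=> a; set d := (\sum_i a i)%N.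
have ha : (mdeg (to_mnm a) <= d)%N by rewrite mdeg_to_mnm.
have low : eq_upto d (trunc d FB_series) (xprod * den_inv d).
  move=> b hb; rewrite coef_trunc // /FB_series of_mnmK mdeg_of_mnm.
  by rewrite (eq_uptoM (eq_upto_refl _) (den_inv_trunc hb)).
rewrite -(to_mnmK a) -(coef_trunc _ ha) (trunc_mul _ _ ha).
rewrite (eq_uptoM low (@trunc_den d) ha).
rewrite -mulrA [den_inv d * _]mulrC (eq_uptoM (eq_upto_refl _) (@den_invP _ _ d) ha).
by rewrite mulr1 -(trunc_num ha) coef_trunc.
Qed.

Lemma FB_expansion_coef (G : series S) a :
  is_FB_expansion G -> G a = (xprod * den_inv (\sum_i a i))@_(to_mnm a).
Proof.
move=> hG; have ha : (mdeg (to_mnm a) <= \sum_i a i)%N by rewrite mdeg_to_mnm.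
by rewrite -(FB_expansion_trunc hG ha) coef_trunc // to_mnmK.
Qed.

End Truncation.

(* x * (Y^M - x^M) / (Y - x) expanded in powers of Z = Y - x:
   x * sum_(r < M) x^r (Z + x)^(M-1-r) = sum_(j < M) C(M, j+1) Z^j x^(M-j). *)
Lemma mul_geom_binomial (R : comNzRingType) (x Z : R) M :
  x * \sum_(r < M) x ^+ r * (Z + x) ^+ (M - 1 - r)
  = \sum_(j < M) (Z ^+ j * x ^+ (M - j)) *+ 'C(M, j.+1).
Proof.
elim: M => [|M ih]; first by rewrite !big_ord0 mulr0.
rewrite big_ord_recl /= expr0 mul1r subn0 subSS subn0.
have -> : \sum_(i < M) x ^+ (bump 0 i) * (Z + x) ^+ (M - bump 0 i)
        = x * \sum_(r < M) x ^+ r * (Z + x) ^+ (M - 1 - r).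
  rewrite big_distrr /=; apply: eq_bigr => i _.
  by rewrite /bump /= add1n exprS mulrA subnS -subn1 subnAC.
rewrite mulrDr ih.
under eq_bigr do rewrite binS mulrnDr.
rewrite big_split /= big_ord_recr /= bin_small // mulr0n addr0 addrC; congr (_ + _).
  rewrite [Z + x]addrC exprDn big_distrr /=; apply: eq_bigr => i _.
  rewrite mulrnAr; congr (_ *+ _).
  by rewrite (subSn (ltn_ord i : (i <= M)%N)) exprS [RHS]mulrC mulrA.
rewrite big_distrr /=; apply: eq_bigr => i _.
by rewrite mulrnAr subSn ?(ltnW (ltn_ord i)) // exprS mulrCA.
Qed.

Lemma sum_shift_ord (V : nmodType) (F : nat -> V) M D : (M <= D)%N ->
  \sum_(j < M) F j.+1 = \sum_(k < D.+1 | (1 <= k)%N && (k <= M)%N) F k.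
Proof.
move=> hMD; under [RHS]eq_bigl do rewrite -ltnS.
rewrite -(@big_ord_widen_cond _ _ _ M.+1 D.+1 (fun k => (0 < k)%N) F) //.
by rewrite [RHS]big_mkcond big_ord_recl /= add0r.
Qed.

Section Counting.
Variables (R : comNzRingType) (S : nat).
Notation poly := {mpoly R[S]}.
Notation Y := (@xsum R S).

Lemma prodX_exp (e : 'I_S -> nat) :
  \prod_(i < S) ('X_i : poly) ^+ e i = 'X_[to_mnm [ffun i => e i]].
Proof. by rewrite mpolyXE_id; apply: eq_bigr => i _; rewrite to_mnmE ffunE. Qed.

Lemma xsum_subX i : Y - 'X_i = \sum_(j | j != i) ('X_j : poly).
Proof. by rewrite /xsum (bigD1 i) //= addrC addrK. Qed.

(* Block derangements as a coefficient: in prod_j (Y - x_j)^(n_j), choosing for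
   each card of player j a variable x_k with k != j is a deal avoiding j, and
   the monomial x^n records that every player gets back as many cards. *)
Lemma E_coef (n : mono S) :
  (E n)%:R = (\prod_(i < S) (Y - 'X_i) ^+ n i)@_(to_mnm n).
Proof.
have -> : \prod_(i < S) (Y - 'X_i) ^+ n i = \prod_(c : card_t n) (Y - 'X_(tag c)).
  rewrite -(@sig_big_dep _ _ _ 'I_S (fun i => 'I_(n i)) xpredT (fun _ _ => true)
              (fun i _ => Y - 'X_i)) /=.
  by apply: eq_bigr => i _; rewrite prodr_const card_ord.
under eq_bigr do rewrite xsum_subX.
rewrite bigA_distr_big_dep raddf_sum /= big_mkcond /=.
have mono_prod f :
    \prod_(c : card_t n) ('X_(f c) : poly) = 'X_[\sum_(c : card_t n) U_(f c)].
  by rewrite (big_morph (fun m => 'X_[m] : poly) (@mpolyXD _ _) (@mpolyX0 _ _)).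
under eq_bigr do rewrite mono_prod mcoeffX.
rewrite /E -sum1_card natr_sum; apply/esym; rewrite [RHS]big_mkcond /=.
apply: eq_bigr => f _.
have -> : (f \in family (fun (c : card_t n) (j : 'I_S) => j != tag c)) =
          [forall c, f c != tag c] by apply/familyP/forallP.
have -> : ((\sum_c U_(f c))%MM == to_mnm n) =
          [forall j : 'I_S, #|[set c | f c == j]| == n j].
  apply/eqP/forallP => [h j | h].
    rewrite -(to_mnmE n j) -h mnm_sumE -sum1_card big_mkcond /=.
    by apply/eqP; apply: eq_bigr => c _; rewrite mnm1E inE; case: (f c == j).
  apply/mnmP => j; rewrite to_mnmE mnm_sumE -(eqP (h j)) -sum1_card.
  rewrite [RHS]big_mkcond /=.
  by apply: eq_bigr => c _; rewrite mnm1E inE; case: (f c == j).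
by rewrite inE; case: [forall c, _]; case: [forall j, _].
Qed.

Lemma xsum_homog k : Y ^+ k \is k.-homog.
Proof.
have Y1 : Y \is 1.-homog by apply: rpred_sum => i _; rewrite dhomogX /= mdeg1.
by have := dhomogMn k Y1; rewrite mul1n.
Qed.

(* Only the homogeneous part Y^k of degree k = |q| of the geometric series
   contributes to the coefficient of x^q. *)
Lemma coef_geom_xsum d (q : 'X_{1..S}) :
  (mdeg q <= d)%N -> (geom d Y)@_q = (Y ^+ mdeg q)@_q.
Proof.
move=> hq; rewrite raddf_sum /= (bigD1 (Ordinal (hq : (mdeg q < d.+1)%N))) //=.
rewrite big1 ?addr0 // => k hk; apply: dhomog_nemf_coeff (xsum_homog k) _.
by apply: contra hk => /eqP e; apply/eqP/val_inj; rewrite /= e.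
Qed.

(* The coefficient of x^m in x_1...x_S * F_B decomposes according to the
   exponents c_i + 1 <= m_i taken from the factors x_i / (1 - x_i); the
   remaining monomial x^(m - c - 1) is taken from Y^|m - c - 1|. *)
Definition exponent_choices (m : mono S) : R :=
  \sum_(c : {ffun 'I_S -> 'I_(\sum_i m i).+1} | [forall i, c i < m i]%N)
     (Y ^+ (\sum_i (m i - (c i).+1)))@_(to_mnm [ffun i => m i - (c i).+1]%N).

Lemma coef_xprod_den_inv (m : mono S) :
  (xprod * den_inv (\sum_i m i))@_(to_mnm m) = exponent_choices m.
Proof.
set d := (\sum_i m i)%N.
have -> : xprod * den_inv d = \prod_(i < S) ('X_i * geom d 'X_i) * geom d Y.
  by rewrite mulrA -big_split.
have -> : \prod_(i < S) (('X_i : poly) * geom d 'X_i) =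
          \sum_(c : {ffun 'I_S -> 'I_d.+1}) 'X_[to_mnm [ffun i => (c i).+1]].
  under eq_bigr do rewrite /geom big_distrr /=.
  rewrite bigA_distr_bigA /=; apply: eq_bigr => c _.
  by rewrite -prodX_exp; apply: eq_bigr => i _; rewrite exprS.
rewrite mulr_suml raddf_sum /= [RHS]big_mkcond /=; apply: eq_bigr => c _.
rewrite coef_Xmul to_mnm_lep.
have -> : [forall i, [ffun i => (c i).+1] i <= m i]%N = [forall i, c i < m i]%N.
  by apply: eq_forallb => i; rewrite ffunE.
case: ifP => // _; rewrite to_mnmB.
have -> : [ffun i => m i - [ffun i => (c i).+1] i]%N = [ffun i => m i - (c i).+1]%N.
  by apply/ffunP => i; rewrite !ffunE.
rewrite coef_geom_xsum; last by apply: mdeg_to_mnm_le => i; rewrite leq_subr.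
by rewrite mdeg_to_mnm; under eq_bigr do rewrite ffunE.
Qed.

Lemma coef_prod_geom (m : mono S) :
  (\prod_(i < S) ('X_i * \sum_(r < m i) 'X_i ^+ r * Y ^+ (m i - 1 - r)))@_(to_mnm m)
  = exponent_choices m.
Proof.
set d := (\sum_i m i)%N.
have m_le i : (m i <= d.+1)%N by apply: leqW; rewrite /d (bigD1 i) //= leq_addr.
have -> : \prod_(i < S) ('X_i * \sum_(r < m i) 'X_i ^+ r * Y ^+ (m i - 1 - r)) =
   \prod_(i < S) \sum_(c : 'I_d.+1 | (c < m i)%N)
                   (('X_i : poly) ^+ c.+1 * Y ^+ (m i - c.+1)).
  apply: eq_bigr => i _; rewrite big_distrr /=.
  rewrite (big_ord_widen _ (fun r => ('X_i : poly) * ('X_i ^+ r * Y ^+ (m i - 1 - r)))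
                         (m_le i)).
  by apply: eq_bigr => c _; rewrite mulrA -exprS -subnDA add1n.
rewrite bigA_distr_big_dep raddf_sum /=.
apply: eq_big => [c | c /familyP c_lt]; first by apply/familyP/forallP.
rewrite big_split /= prodX_exp prodrXr coef_Xmul to_mnm_lep.
have -> : [forall i, [ffun i => (c i).+1] i <= m i]%N.
  by apply/forallP => i; rewrite ffunE; exact: c_lt.
by congr (_@_ _); apply/mnmP => i; rewrite mnmBE !to_mnmE !ffunE.
Qed.

(* The coefficient of x^m in x_1...x_S * F_B is B(m): expand each factor with
   [mul_geom_binomial] for Y = (Y - x_i) + x_i and read the coefficients of the
   products of powers of Y - x_i with [E_coef].  No positivity of m is needed:
   if some m_i = 0, both sides vanish. *)
Lemma coef_xprod_den_inv_B (m : mono S) :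
  (xprod * den_inv (\sum_i m i))@_(to_mnm m) = (B m)%:R :> R.
Proof.
rewrite coef_xprod_den_inv -coef_prod_geom.
set d := (\sum_i m i)%N.
have m_le i : (m i <= d)%N by rewrite /d (bigD1 i) //= leq_addr.
have -> : \prod_(i < S) ('X_i * \sum_(r < m i) 'X_i ^+ r * Y ^+ (m i - 1 - r)) =
  \prod_(i < S) \sum_(k < d.+1 | (1 <= k <= m i)%N)
     (((Y - 'X_i) ^+ k.-1 * ('X_i : poly) ^+ (m i - k.-1)) *+ 'C(m i, k)).
  apply: eq_bigr => i _; rewrite -{1}(subrK 'X_i Y) mul_geom_binomial.
  exact: (sum_shift_ord
    (fun k => ((Y - 'X_i) ^+ k.-1 * 'X_i ^+ (m i - k.-1)) *+ 'C(m i, k)) (m_le i)).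
rewrite bigA_distr_big_dep raddf_sum /= /B natr_sum.
apply: eq_big => [k | k /familyP k_range]; first by apply/familyP/forallP.
rewrite prodrMn big_split /= prodX_exp mcoeffMn.
have -> : to_mnm m =
    (to_mnm [ffun i => m i - (k i).-1]%N + to_mnm [ffun i => (k i).-1])%MM.
  apply/mnmP => i; rewrite mnmDE !to_mnmE !ffunE subnK //.
  by case/andP: (k_range i) => _; apply: leq_trans; exact: leq_pred.
rewrite mcoeffMX natrM mulrC mulr_natr E_coef; congr (_@__ *+ _).
by apply: eq_bigr => i _; rewrite ffunE.
Qed.
End Counting.

Theorem mainTheorem11 (S : nat) (m : {ffun 'I_S -> nat}) :
  (forall i, (0 < m i)%N) ->
  (exists G : series S, is_FB_expansion G) /\
  (forall G : series S, is_FB_expansion G -> G m = ((B m)%:R)%R).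
Proof.
move=> _; split; first by exists (@FB_series S); exact: FB_seriesP.
by move=> G hG; rewrite (FB_expansion_coef m hG) coef_xprod_den_inv_B.
Qed.
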